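(* Let $\mathcal{H}$ be a finite-dimensional complex Hilbert space, let $\ket{\psi_1},\ket{\psi_2}\in\mathcal{H}$ be pure states, let $\rho=\tfrac12(\ket{\psi_1}\!\bra{\psi_1}+\ket{\psi_2}\!\bra{\psi_2})$, and let $\alpha,\beta\in[0,1]$. Then for every ontological model (as defined in the context) for these preparations, $$\tfrac12\,\omega_\Lambda(\psi_1,\psi_2;\alpha,\beta)\le 2(1+\beta)-(1-\alpha)D_Q(\psi_1,\psi_2)-D_Q\big(\{\psi_1,\tfrac{1+\beta}{2}\},\{\rho,\alpha+\beta\}\big)-D_Q\big(\{\psi_2,\tfrac{1+\beta}{2}\},\{\rho,\alpha+\beta\}\big).$$
   Context: For a state $\sigma$ and POVM $\mathcal{M}=\{M_k\}$, $p(k|\sigma,\mathcal{M})=\mathrm{Tr}(\sigma M_k)$. Weighted distinguishability: for states $\phi_1,\phi_2$ and weights $w_1,w_2\ge0$, $D_Q(\{\phi_1,w_1\},\{\phi_2,w_2\})=\max_{\mathcal{M}}\big(w_1p(1|\phi_1,\mathcal{M})+w_2p(2|\phi_2,\mathcal{M})\big)$ over all two-outcome POVMs $\mathcal{M}=\{M_1,M_2\}$; $D_Q(\psi_1,\psi_2)=D_Q(\{\psi_1,\tfrac12\},\{\psi_2,\tfrac12\})$. Ontological model: a measure space $(\Lambda,d\lambda)$; for each preparation $\sigma\in\{\psi_1,\psi_2,\rho\}$ a probability density $\mu(\lambda|\sigma)\ge0$ with $\int_\Lambda\mu(\lambda|\sigma)d\lambda=1$; for each $n$-outcome POVM $\mathcal{M}=\{M_k\}$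 response functions $\xi(k|\lambda,\mathcal{M})\ge0$ with $\sum_k\xi(k|\lambda,\mathcal{M})=1$ for all $\lambda$; such that $\mathrm{Tr}(\sigma M_k)=\int_\Lambda\mu(\lambda|\sigma)\xi(k|\lambda,\mathcal{M})d\lambda$ for all such $\sigma,\mathcal{M},k$. Moreover $\mu(\lambda|\rho)=\tfrac12(\mu(\lambda|\psi_1)+\mu(\lambda|\psi_2))$ for all $\lambda$. Generalized epistemic overlap: with $\tilde\mu_1=(1+\beta)\mu(\cdot|\psi_1)$, $\tilde\mu_2=(1+\beta)\mu(\cdot|\psi_2)$, $\tilde\mu_3=(\alpha+\beta)(\mu(\cdot|\psi_1)+\mu(\cdot|\psi_2))$, $\omega_\Lambda(\psi_1,\psi_2;\alpha,\beta)=\int_\Lambda\min(\tilde\mu_1,\tilde\mu_2)d\lambda+\int_\Lambda\min(\tilde\mu_1,\tilde\mu_3)d\lambda+\int_\Lambda\min(\tilde\mu_2,\tilde\mu_3)d\lambda-2(\alpha+\beta)-\int_\Lambda\min(\tilde\mu_1,\tilde\mu_2,\tilde\mu_3)d\lambda$. *)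

From HB Require Import structures.
From mathcomp Require Import all_boot all_order all_algebra.
From mathcomp Require Import complex.
From mathcomp Require Import all_classical all_reals all_analysis.

Set Implicit Arguments.
Unset Strict Implicit.
Unset Printing Implicit Defensive.

Import Order.TTheory GRing.Theory Num.Theory.
Local Open Scope classical_set_scope.
Local Open Scope ring_scope.

(* The Hilbert space is C^n, C = R[i] for R : realType; vectors are columns. *)

Definition dagger (R : realType) (p q : nat) (A : 'M[R[i]]_(p, q)) : 'M[R[i]]_(q, p) :=
  (map_mx Num.conj A)^T.

(* positive semidefinite (over C): <v, A v> is real and >= 0 for all v
   (in the partial order of the numClosedFieldType R[i], 0 <= z means z is a
   nonnegative real) *)
Definition psdmx (R : realType) (n : nat) (A : 'M[R[i]]_n) : Prop :=
  forall v : 'cV[R[i]]_n, 0 <= (dagger v *m A *m v) ord0 ord0.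

Definition is_povm (R : realType) (n k : nat) (M : 'I_k -> 'M[R[i]]_n) : Prop :=
  (forall j, psdmx (M j)) /\ \sum_(j < k) M j = 1%:M.

Definition pure_state (R : realType) (n : nat) (psi : 'cV[R[i]]_n) : Prop :=
  (dagger psi *m psi) ord0 ord0 = 1.

Definition ketbra (R : realType) (n : nat) (psi : 'cV[R[i]]_n) : 'M[R[i]]_n :=
  psi *m dagger psi.

Definition rho_mix (R : realType) (n : nat) (psi1 psi2 : 'cV[R[i]]_n) : 'M[R[i]]_n :=
  2^-1 *: (ketbra psi1 + ketbra psi2).

(* p(k | sigma, M) = Tr(sigma M_k)  (real for sigma, M_k psd; we take the real part) *)
Definition prob (R : realType) (n : nat) (sigma Mk : 'M[R[i]]_n) : R :=
  complex.Re (\tr (sigma *m Mk)).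

(* weighted distinguishability: max (= sup) over two-outcome POVMs {M_1, M_2};
   outcome 1 is ord0 and outcome 2 is ord_max of 'I_2 *)
Definition DQw (R : realType) (n : nat) (phi1 : 'M[R[i]]_n) (w1 : R)
    (phi2 : 'M[R[i]]_n) (w2 : R) : R :=
  sup [set x : R | exists M : 'I_2 -> 'M[R[i]]_n,
         is_povm M /\ x = w1 * prob phi1 (M ord0) + w2 * prob phi2 (M ord_max)].

Definition DQ (R : realType) (n : nat) (phi1 phi2 : 'M[R[i]]_n) : R :=
  DQw phi1 2^-1 phi2 2^-1.

Definition prob_density (R : realType) (d : measure_display) (L : measurableType d)
    (m : {measure set L -> \bar R}) (f : L -> R) : Prop :=
  measurable_fun setT f /\ (forall x, 0 <= f x) /\
  (\int[m]_x (f x)%:E = 1)%E.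

Definition response_functions (R : realType) (n : nat) (d : measure_display)
    (L : measurableType d) (k : nat) (xiM : 'I_k -> L -> R) : Prop :=
  (forall j, measurable_fun setT (xiM j)) /\
  (forall j x, 0 <= xiM j x) /\
  (forall x, \sum_(j < k) xiM j x = 1).

Definition reproduces (R : realType) (n : nat) (d : measure_display)
    (L : measurableType d) (m : {measure set L -> \bar R})
    (xi : forall k : nat, ('I_k -> 'M[R[i]]_n) -> 'I_k -> L -> R)
    (sigma : 'M[R[i]]_n) (f : L -> R) : Prop :=
  forall (k : nat) (M : 'I_k -> 'M[R[i]]_n), is_povm M ->
    forall j : 'I_k, (prob sigma (M j))%:E = (\int[m]_x (f x * xi k M j x)%:E)%E.

Definition ontological_model (R : realType) (n : nat) (d : measure_display)
    (L : measurableType d) (m : {measure set L -> \bar R})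
    (sigma1 sigma2 sigmar : 'M[R[i]]_n) (mu1 mu2 mur : L -> R)
    (xi : forall k : nat, ('I_k -> 'M[R[i]]_n) -> 'I_k -> L -> R) : Prop :=
  [/\ prob_density m mu1, prob_density m mu2 & prob_density m mur] /\
  (forall (k : nat) (M : 'I_k -> 'M[R[i]]_n), is_povm M ->
     response_functions n (xi k M)) /\
  [/\ reproduces m xi sigma1 mu1, reproduces m xi sigma2 mu2
     & reproduces m xi sigmar mur] /\
  (forall x, mur x = 2^-1 * (mu1 x + mu2 x)).

Definition omega_overlap (R : realType) (d : measure_display) (L : measurableType d)
    (m : {measure set L -> \bar R}) (mu1 mu2 : L -> R) (alpha beta : R) : \bar R :=
  let t1 := fun x => (1 + beta) * mu1 x in
  let t2 := fun x => (1 + beta) * mu2 x in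
  let t3 := fun x => (alpha + beta) * (mu1 x + mu2 x) in
  (\int[m]_x (Num.min (t1 x) (t2 x))%:E
   + \int[m]_x (Num.min (t1 x) (t3 x))%:E
   + \int[m]_x (Num.min (t2 x) (t3 x))%:E
   - (2 * (alpha + beta))%:E
   - \int[m]_x (Num.min (Num.min (t1 x) (t2 x)) (t3 x))%:E)%E.

(* The response functions of a two-outcome measurement sum to 1, so pointwise
   w1 mu1 xi_1 + w2 mu2 xi_2 <= w1 mu1 + w2 mu2 - min (w1 mu1, w2 mu2), and
   integrating gives D_Q({sigma1, w1}, {sigma2, w2}) <= w1 + w2 - int min
   (w1 mu1, w2 mu2).  Applied to (psi1, psi2) and to (psi_j, rho), where
   mu_rho = (mu1 + mu2) / 2 makes the overlap half of int min (t_j, t3), this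
   bounds the three distinguishabilities by the pairwise overlaps of
   t1 = (1 + beta) mu1, t2 = (1 + beta) mu2, t3 = (alpha + beta) (mu1 + mu2).
   The pointwise inequality
   min (t1, t2) <= min (t1, t2, t3) + (1 - alpha) min (mu1, mu2)
   then trades the remaining pairwise term for the triple one in omega. *)

From HB Require Import structures.
From mathcomp Require Import all_boot all_order all_algebra.
From mathcomp Require Import complex.
From mathcomp Require Import all_classical all_reals all_analysis.
From mathcomp Require Import ring lra measurable_realfun.
Set Implicit Arguments.
Unset Strict Implicit.
Unset Printing Implicit Defensive.

Import Order.TTheory GRing.Theory Num.Theory.
Local Open Scope classical_set_scope.
Local Open Scope ring_scope.

Section dominated_integrals.
Context (R : realType) (d : measure_display) (L : measurableType d)
  (m : {measure set L -> \bar R}).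
Implicit Types (f g : L -> R).

Lemma integrableZ_EFin (k : R) g : m.-integrable setT (EFin \o g) ->
  m.-integrable setT (EFin \o (fun x => k * g x)).
Proof.
move=> /(integrableZl measurableT k).
by apply: (eq_integrable measurableT) => x _ /=; rewrite EFinM.
Qed.

Lemma integrableD_EFin g1 g2 :
  m.-integrable setT (EFin \o g1) -> m.-integrable setT (EFin \o g2) ->
  m.-integrable setT (EFin \o (fun x => g1 x + g2 x)).
Proof.
move=> i1 i2; have := integrableD measurableT i1 i2.
by apply: (eq_integrable measurableT) => x _.
Qed.

Lemma integrable_density f :
  prob_density m f -> m.-integrable setT (EFin \o f).
Proof.
move=> [mf [f_ge0 f1]]; apply/integrableP; split; first exact/measurable_EFinP.
under eq_integral do rewrite /= ger0_norm//.
by rewrite f1 ltry.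
Qed.

Lemma integrable_dominated f g (c : R) : prob_density m f ->
  measurable_fun setT g -> (forall x, 0 <= g x <= c * f x) ->
  m.-integrable setT (EFin \o g).
Proof.
move=> df mg gc; have := integrableZ_EFin c (integrable_density df).
apply: le_integrable => //; first exact/measurable_EFinP.
move=> x _ /=; rewrite lee_fin.
have /andP[g0 gf] := gc x.
by rewrite ger0_norm // (le_trans gf) // ler_norm.
Qed.

Lemma integrable_minr_dominated f g1 g2 (c : R) : prob_density m f ->
  measurable_fun setT g1 -> measurable_fun setT g2 ->
  (forall x, 0 <= g1 x <= c * f x) -> (forall x, 0 <= g2 x) ->
  m.-integrable setT (EFin \o fun x => Num.min (g1 x) (g2 x)).
Proof.
move=> df mg1 mg2 g1f g2_ge0; apply: (integrable_dominated (c := c) df).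
  exact: measurable_minr.
move=> x; have /andP[g1_ge0 g1_le] := g1f x.
by rewrite le_min g1_ge0 g2_ge0 /= (le_trans _ g1_le) // ge_min lexx.
Qed.

Lemma Rintegral_density f : prob_density m f -> \int[m]_x f x = 1.
Proof. by move=> [_ [_ f1]]; rewrite /Rintegral f1. Qed.

Lemma EFin_Rintegral g : m.-integrable setT (EFin \o g) ->
  (\int[m]_x g x)%:E = (\int[m]_x (g x)%:E)%E.
Proof. by move=> ig; rewrite fineK //; exact: integrable_fin_num. Qed.

Lemma Rintegral_le_density f g (c : R) : prob_density m f ->
  measurable_fun setT g -> (forall x, 0 <= g x <= c * f x) ->
  \int[m]_x g x <= c.
Proof.
move=> df mg gc; rewrite -[c]mulr1 -(Rintegral_density df) -RintegralZl //.
  apply: le_Rintegral => //; first exact: integrable_dominated gc.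
    exact: integrableZ_EFin (integrable_density df).
  by move=> x _; case/andP: (gc x).
exact: integrable_density.
Qed.

Lemma Rintegral_minr_pM (c : R) g1 g2 : 0 <= c ->
  m.-integrable setT (EFin \o (fun x => Num.min (g1 x) (g2 x))) ->
  \int[m]_x Num.min (c * g1 x) (c * g2 x) =
    c * \int[m]_x Num.min (g1 x) (g2 x).
Proof.
move=> c0 ig; rewrite -RintegralZl //.
by apply: eq_Rintegral => x _; rewrite minr_pMr.
Qed.

End dominated_integrals.

(* [sup set0 = 0], hence the hypothesis [0 <= x]. *)
Lemma ge0_ge_sup (R : realType) (E : set R) (x : R) :
  0 <= x -> ubound E x -> sup E <= x.
Proof.
move=> x_ge0 Ex; have [->|/set0P E0] := eqVneq E set0; first by rewrite sup0.
exact: ge_sup.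
Qed.

Lemma two_outcome_le (R : realDomainType) (a b h u v : R) :
  0 <= u -> 0 <= v -> u + v = 1 -> h <= a -> h <= b ->
  a * u + b * v + h <= a + b.
Proof.
move=> u0 v0 uv1 ha hb.
have hv : h * v <= a * v by exact: ler_wpM2r.
have hu : h * u <= b * u by exact: ler_wpM2r.
have -> : h = h * u + h * v by rewrite -mulrDr uv1 mulr1.
have -> : a + b = a * u + a * v + (b * u + b * v).
  by rewrite -!mulrDr uv1 !mulr1.
lra.
Qed.

Section ontological_distinguishability.
Context (R : realType) (n : nat) (d : measure_display) (L : measurableType d)
  (m : {measure set L -> \bar R}).

Definition response_model
    (xi : forall k : nat, ('I_k -> 'M[R[i]]_n) -> 'I_k -> L -> R) : Prop :=
  forall (k : nat) (M : 'I_k -> 'M[R[i]]_n),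
    is_povm M -> response_functions n (xi k M).

Variable xi : forall k : nat, ('I_k -> 'M[R[i]]_n) -> 'I_k -> L -> R.
Arguments xi : clear implicits.
Hypothesis xi_response : response_model xi.

Lemma prob_Rintegral (sigma : 'M[R[i]]_n) (f : L -> R) (k : nat)
    (M : 'I_k -> 'M[R[i]]_n) (j : 'I_k) :
  reproduces m xi sigma f -> is_povm M ->
  prob sigma (M j) = \int[m]_x (f x * xi k M j x).
Proof. by move=> rep PM; rewrite /Rintegral -(rep k M PM j). Qed.

Lemma response2_sum (M : 'I_2 -> 'M[R[i]]_n) (x : L) : is_povm M ->
  xi 2 M ord0 x + xi 2 M ord_max x = 1.
Proof.
move=> /xi_response [_ [_ xi1]]; rewrite -(xi1 x) big_ord_recl big_ord1.
by congr (_ + xi 2 M _ x); apply: val_inj.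
Qed.

Lemma two_outcome_success_le (sigma1 sigma2 : 'M[R[i]]_n) (w1 w2 : R)
    (f1 f2 : L -> R) (M : 'I_2 -> 'M[R[i]]_n) :
  0 <= w1 -> 0 <= w2 -> prob_density m f1 -> prob_density m f2 ->
  reproduces m xi sigma1 f1 -> reproduces m xi sigma2 f2 -> is_povm M ->
  w1 * prob sigma1 (M ord0) + w2 * prob sigma2 (M ord_max) <=
    w1 + w2 - \int[m]_x Num.min (w1 * f1 x) (w2 * f2 x).
Proof.
move=> w1_ge0 w2_ge0 df1 df2 rep1 rep2 PM.
rewrite (prob_Rintegral _ rep1 PM) (prob_Rintegral _ rep2 PM).
have [mf1 [f1_ge0 _]] := df1; have [mf2 [f2_ge0 _]] := df2.
have [mxi [xi_ge0 _]] := xi_response PM.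
have xi_sum x := response2_sum x PM.
have u_ge0 := xi_ge0 ord0; have v_ge0 := xi_ge0 ord_max.
set u := xi 2 M ord0; set v := xi 2 M ord_max.
have u_le1 x : u x <= 1 by have := xi_sum x; have := v_ge0 x; rewrite /u; lra.
have v_le1 x : v x <= 1 by have := xi_sum x; have := u_ge0 x; rewrite /v; lra.
set h := fun x => Num.min (w1 * f1 x) (w2 * f2 x).
have mh : measurable_fun setT h.
  by apply: measurable_minr; exact: measurable_funM.
have h_le1 x : 0 <= h x <= w1 * f1 x by rewrite le_min !mulr_ge0 // ge_min lexx.
have ih := integrable_dominated df1 mh h_le1.
have iu : m.-integrable setT (EFin \o fun x => f1 x * u x).
  apply: (integrable_dominated (c := 1) df1).
    exact: measurable_funM mf1 (mxi ord0).
  by move=> x; rewrite mul1r ler_piMr // andbT mulr_ge0.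
have iv : m.-integrable setT (EFin \o fun x => f2 x * v x).
  apply: (integrable_dominated (c := 1) df2).
    exact: measurable_funM mf2 (mxi ord_max).
  by move=> x; rewrite mul1r ler_piMr // andbT mulr_ge0.
have iu' := integrableZ_EFin w1 iu; have iv' := integrableZ_EFin w2 iv.
have iuv := integrableD_EFin iu' iv'.
have if1 := integrable_density df1; have if2 := integrable_density df2.
have iwf1 := integrableZ_EFin w1 if1; have iwf2 := integrableZ_EFin w2 if2.
have le_int : \int[m]_x (w1 * (f1 x * u x) + w2 * (f2 x * v x) + h x)
    <= \int[m]_x (w1 * f1 x + w2 * f2 x).
  apply: le_Rintegral => //.
  - exact: integrableD_EFin iuv ih.
  - exact: integrableD_EFin.
  move=> x _; rewrite !mulrA; apply: two_outcome_le; rewrite ?xi_sum //.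
  - by rewrite /h ge_min lexx.
  - by rewrite /h ge_min lexx orbT.
move: le_int; rewrite !RintegralD ?RintegralZl //.
by rewrite (Rintegral_density df1) (Rintegral_density df2) !mulr1; lra.
Qed.

Lemma DQw_le_overlap (sigma1 sigma2 : 'M[R[i]]_n) (w1 w2 : R)
    (f1 f2 : L -> R) :
  0 <= w1 -> 0 <= w2 -> prob_density m f1 -> prob_density m f2 ->
  reproduces m xi sigma1 f1 -> reproduces m xi sigma2 f2 ->
  DQw sigma1 w1 sigma2 w2 <=
    w1 + w2 - \int[m]_x Num.min (w1 * f1 x) (w2 * f2 x).
Proof.
move=> w1_ge0 w2_ge0 df1 df2 rep1 rep2.
apply: ge0_ge_sup => [|_ [M [PM ->]]]; last exact: two_outcome_success_le.
have [mf1 [f1_ge0 _]] := df1; have [mf2 [f2_ge0 _]] := df2.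
suff : \int[m]_x Num.min (w1 * f1 x) (w2 * f2 x) <= w1 by lra.
apply: (Rintegral_le_density df1).
  by apply: measurable_minr; exact: measurable_funM.
by move=> x; rewrite le_min !mulr_ge0 // ge_min lexx.
Qed.

End ontological_distinguishability.

Lemma minr_pair_le_min3 (R : realDomainType) (c e a b : R) :
  0 <= e <= c -> 0 <= a -> 0 <= b ->
  Num.min (c * a) (c * b) <=
    Num.min (Num.min (c * a) (c * b)) (e * (a + b)) + (c - e) * Num.min a b.
Proof.
move=> /andP[e0 ec] a0 b0; have c0 : 0 <= c by exact: le_trans ec.
have min_ge0 : 0 <= Num.min a b by rewrite le_min a0 b0.
rewrite -minr_pMr // -lerBlDr.
have -> : c * Num.min a b - (c - e) * Num.min a b = e * Num.min a b by ring.
by rewrite le_min ler_wpM2r //= ler_wpM2l // ge_min lerDl b0.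
Qed.

Section generalized_overlap.
Context (R : realType) (d : measure_display) (L : measurableType d)
  (m : {measure set L -> \bar R}) (mu1 mu2 : L -> R) (alpha beta : R).
Hypotheses (dmu1 : prob_density m mu1) (dmu2 : prob_density m mu2)
  (alpha_ge0 : 0 <= alpha) (beta_ge0 : 0 <= beta).

Local Notation t1 x := ((1 + beta) * mu1 x).
Local Notation t2 x := ((1 + beta) * mu2 x).
Local Notation t3 x := ((alpha + beta) * (mu1 x + mu2 x)).

Let mmu1 : measurable_fun setT mu1. Proof. by case: dmu1. Qed.
Let mmu2 : measurable_fun setT mu2. Proof. by case: dmu2. Qed.
Let mu1_ge0 x : 0 <= mu1 x. Proof. by case: dmu1 => _ []. Qed.
Let mu2_ge0 x : 0 <= mu2 x. Proof. by case: dmu2 => _ []. Qed.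
Let mt1 : measurable_fun setT (fun x => t1 x).
Proof. exact: measurable_funM. Qed.
Let mt2 : measurable_fun setT (fun x => t2 x).
Proof. exact: measurable_funM. Qed.
Let mt3 : measurable_fun setT (fun x => t3 x).
Proof. by apply: measurable_funM => //; exact: measurable_funD. Qed.
Let t1_ge0 x : 0 <= t1 x. Proof. by rewrite mulr_ge0 // addr_ge0. Qed.
Let t2_ge0 x : 0 <= t2 x. Proof. by rewrite mulr_ge0 // addr_ge0. Qed.
Let t3_ge0 x : 0 <= t3 x. Proof. by rewrite mulr_ge0 // addr_ge0. Qed.

Let t1_le x : 0 <= t1 x <= (1 + beta) * mu1 x.
Proof. by rewrite t1_ge0 lexx. Qed.
Let t2_le x : 0 <= t2 x <= (1 + beta) * mu2 x.
Proof. by rewrite t2_ge0 lexx. Qed.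
Let mu1_le x : 0 <= mu1 x <= 1 * mu1 x.
Proof. by rewrite mu1_ge0 mul1r lexx. Qed.

Let int12 := integrable_minr_dominated dmu1 mt1 mt2 t1_le t2_ge0.
Let int13 := integrable_minr_dominated dmu1 mt1 mt3 t1_le t3_ge0.
Let int23 := integrable_minr_dominated dmu2 mt2 mt3 t2_le t3_ge0.
Let int123 : m.-integrable setT
    (EFin \o fun x => Num.min (Num.min (t1 x) (t2 x)) (t3 x)).
Proof.
apply: (integrable_minr_dominated (c := 1 + beta) dmu1 _ mt3 _ t3_ge0).
  exact: measurable_minr.
by move=> x; rewrite le_min t1_ge0 t2_ge0 /= ge_min lexx.
Qed.
Let int_mu := integrable_minr_dominated dmu1 mmu1 mmu2 mu1_le mu2_ge0.

Lemma omega_overlapE : omega_overlap m mu1 mu2 alpha beta =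
  (\int[m]_x Num.min (t1 x) (t2 x) + \int[m]_x Num.min (t1 x) (t3 x)
   + \int[m]_x Num.min (t2 x) (t3 x) - 2 * (alpha + beta)
   - \int[m]_x Num.min (Num.min (t1 x) (t2 x)) (t3 x))%:E.
Proof.
by rewrite /omega_overlap /= -!EFin_Rintegral // !EFinB !EFinD.
Qed.

Lemma overlap12_le_overlap123 : alpha <= 1 ->
  \int[m]_x Num.min (t1 x) (t2 x) <=
    \int[m]_x Num.min (Num.min (t1 x) (t2 x)) (t3 x)
    + (1 - alpha) * \int[m]_x Num.min (mu1 x) (mu2 x).
Proof.
move=> alpha_le1.
have -> : 1 - alpha = (1 + beta) - (alpha + beta) by ring.
rewrite -RintegralZl // -RintegralD //; last exact: integrableZ_EFin.
apply: le_Rintegral => //; first exact: integrableD_EFin (integrableZ_EFin _ _).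
move=> x _; apply: minr_pair_le_min3 => //.
by rewrite addr_ge0 //= lerD2r.
Qed.

Lemma half_overlapE : \int[m]_x Num.min (2^-1 * mu1 x) (2^-1 * mu2 x) =
  2^-1 * \int[m]_x Num.min (mu1 x) (mu2 x).
Proof. by rewrite Rintegral_minr_pM // invr_ge0. Qed.

Lemma rho_overlapE (f murho : L -> R) : prob_density m f ->
  (forall x, murho x = 2^-1 * (mu1 x + mu2 x)) ->
  \int[m]_x Num.min ((1 + beta) / 2 * f x) ((alpha + beta) * murho x) =
  2^-1 * \int[m]_x Num.min ((1 + beta) * f x) (t3 x).
Proof.
move=> df rhoE; rewrite -Rintegral_minr_pM ?invr_ge0 //; last first.
  apply: (integrable_minr_dominated (c := 1 + beta) df _ mt3 _ t3_ge0).
    by apply: measurable_funM => //; case: df.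
  by move=> x; rewrite mulr_ge0 ?addr_ge0 //=; case: df => _ [].
by apply: eq_Rintegral => x _; rewrite rhoE; congr Num.min; ring.
Qed.

End generalized_overlap.

Theorem lemma1 (R : realType) (n : nat) (psi1 psi2 : 'cV[R[i]]_n) (alpha beta : R)
    (d : measure_display) (L : measurableType d) (m : {measure set L -> \bar R})
    (mu1 mu2 murho : L -> R)
    (xi : forall k : nat, ('I_k -> 'M[R[i]]_n) -> 'I_k -> L -> R) :
  pure_state psi1 -> pure_state psi2 ->
  0 <= alpha <= 1 -> 0 <= beta <= 1 ->
  ontological_model m (ketbra psi1) (ketbra psi2) (rho_mix psi1 psi2) mu1 mu2 murho xi ->
  ((2^-1)%:E * omega_overlap m mu1 mu2 alpha beta
   <= (2 * (1 + beta) - (1 - alpha) * DQ (ketbra psi1) (ketbra psi2)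
       - DQw (ketbra psi1) ((1 + beta) / 2) (rho_mix psi1 psi2) (alpha + beta)
       - DQw (ketbra psi2) ((1 + beta) / 2) (rho_mix psi1 psi2) (alpha + beta))%:E)%E.
Proof.
move=> _ _ /andP[alpha_ge0 alpha_le1] /andP[beta_ge0 _]
  [[dmu1 dmu2 dmurho] [resp [[rep1 rep2 reprho] rhoE]]].
have half_ge0 : 0 <= 2^-1 :> R by rewrite invr_ge0.
have w_ge0 : 0 <= (1 + beta) / 2 by rewrite divr_ge0 ?addr_ge0.
have ab_ge0 : 0 <= alpha + beta by rewrite addr_ge0.
have DQ_le := DQw_le_overlap resp half_ge0 half_ge0 dmu1 dmu2 rep1 rep2.
rewrite half_overlapE // -/(DQ _ _) in DQ_le.
have DQ1_le := DQw_le_overlap resp w_ge0 ab_ge0 dmu1 dmurho rep1 reprho.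
rewrite (rho_overlapE dmu1 dmu2 alpha_ge0 beta_ge0 dmu1 rhoE) in DQ1_le.
have DQ2_le := DQw_le_overlap resp w_ge0 ab_ge0 dmu2 dmurho rep2 reprho.
rewrite (rho_overlapE dmu1 dmu2 alpha_ge0 beta_ge0 dmu2 rhoE) in DQ2_le.
have overlap_le :=
  overlap12_le_overlap123 dmu1 dmu2 alpha_ge0 beta_ge0 alpha_le1.
have a1 : 0 <= 1 - alpha by rewrite subr_ge0.
have := ler_wpM2l a1 DQ_le.
rewrite omega_overlapE // -EFinM lee_fin.
move: DQ1_le DQ2_le overlap_le.
set r13 := \int[m]_x _; set r23 := \int[m]_x _.
set r12 := \int[m]_x _; set r123 := \int[m]_x _; set rm := \int[m]_x _.
set D := DQ _ _; set D1 := DQw (ketbra psi1) _ _ _; set D2 := DQw _ _ _ _.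
clearbody r13 r23 r12 r123 rm D D1 D2.
lra.
Qed.
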